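(* For all real $\alpha,\beta,\alpha',\beta'$ with $\beta\neq0$ and $\beta'\neq0$, every integer $n\ge0$ and every real $x$, \[ P_n^{(\alpha,\beta)}(x)=\sum_{j=0}^{n}(-1)^jS_{\alpha-\frac{\alpha'}{\beta'}\beta,\ \frac{\beta}{\beta'}}(n,j)\,P_j^{(\alpha',\beta')}(x). \] In particular, taking $(\alpha',\beta')=(-\alpha,-\beta)$, \[ P_n^{(\alpha,\beta)}(x)=\sum_{j=0}^{n}(-1)^jL(n,j)\,P_j^{(-\alpha,-\beta)}(x), \] where $L(n,j)$ are the (unsigned) Lah numbers: $L(0,0)=1$, $L(n,0)=0$ for $n\ge1$, and $L(n,j)=\binom{n-1}{j-1}\frac{n!}{j!}$ for $1\le j\le n$.
   Context: For real $a$ and integer $n\ge 1$, $\langle a\rangle_n:=a(a+1)\cdots(a+n-1)$ and $\langle a\rangle_0:=1$. For real $\alpha,\beta$ and integers $0\le k\le n$, $S_{\alpha,\beta}(n,k):=\frac{1}{k!}\sum_{j=0}^{k}(-1)^{k-j}\binom{k}{j}\langle-\alpha-\beta j\rangle_n$. For real $\alpha,\beta$ with $\beta\neq0$, the polynomials $P_n^{(\alpha,\beta)}(x)$ are defined by $\sum_{n\ge0}P_n^{(\alpha,\beta)}(x)\frac{t^n}{n!}=(1-t)^{\alpha}\exp\big(x((1-t)^{\beta}-1)\big)$ (formal power series in $t$). *)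

(* the statement is purely algebraic (formal power series
   identity), stated over an arbitrary real field R. *)
From HB Require Import structures.
From mathcomp Require Import all_boot all_order all_algebra.
Set Implicit Arguments. Unset Strict Implicit. Unset Printing Implicit Defensive.
Import Order.TTheory GRing.Theory Num.Theory.
Local Open Scope ring_scope.

Definition rising {R : ringType} (a : R) (n : nat) : R :=
  \prod_(i < n) (a + i%:R).

Definition Sab {R : fieldType} (al be : R) (n k : nat) : R :=
  (k`!%:R)^-1 * \sum_(j < k.+1)
     (-1) ^+ (k - j) * 'C(k, j)%:R * rising (- al - be * j%:R) n.

(* Formal power series in t over R, as coefficient sequences. *)
Definition fps (R : Type) := nat -> R.

Definition fps_mul {R : ringType} (f g : fps R) : fps R :=
  fun n => \sum_(i < n.+1) f i * g (n - i)%N.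

Definition fps_one {R : ringType} : fps R := fun n => if n == 0%N then 1 else 0.

Definition fps_pow {R : ringType} (f : fps R) (m : nat) : fps R :=
  iter m (fps_mul f) fps_one.

(* (1 - t)^a = sum_k binom(a,k) (-t)^k = sum_k <-a>_k t^k / k! *)
Definition fps_binom {R : fieldType} (a : R) : fps R :=
  fun k => rising (- a) k / k`!%:R.

(* (1 - t)^b - 1 : zero constant term *)
Definition fps_binom_m1 {R : fieldType} (b : R) : fps R :=
  fun k => fps_binom b k - fps_one k.

(* exp(x * u) for a series u with u 0 = 0 (formal composition) *)
Definition fps_expx {R : fieldType} (x : R) (u : fps R) : fps R :=
  fun n => \sum_(m < n.+1) x ^+ m / m`!%:R * fps_pow u m n.

(* P_n^{(alpha,beta)}(x) = n! [t^n] (1-t)^alpha exp(x((1-t)^beta - 1)) *)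
Definition Ppoly {R : fieldType} (al be : R) (n : nat) (x : R) : R :=
  n`!%:R * fps_mul (fps_binom al) (fps_expx x (fps_binom_m1 be)) n.

Definition lah {R : fieldType} (n j : nat) : R :=
  if n == 0%N then (if j == 0%N then 1 else 0)
  else if j == 0%N then 0
  else 'C(n.-1, j.-1)%:R * n`!%:R / j`!%:R.

From HB Require Import structures.
From mathcomp Require Import all_boot all_order all_algebra ring zify.
Set Implicit Arguments.
Unset Strict Implicit.
Unset Printing Implicit Defensive.

Import Order.TTheory GRing.Theory Num.Theory.
Local Open Scope ring_scope.

(* [k! S_{a,b}(n,k)] is the k-th forward difference at 0 of [j |-> <-a-bj>_n], a
   polynomial of degree n in j; Newton interpolation therefore gives
   [<-a-bc>_n = \sum_j (-1)^j S_{a,b}(n,j) <-c>_j] for every c, and applying this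
   to the difference defining [S_{c,d}(j,k)] yields the composition law
   [\sum_j (-1)^j S_{a,b}(n,j) S_{c,d}(j,k) = S_{a+bc,bd}(n,k)].
   On the series side, expanding [((1-t)^b - 1)^m] by the binomial theorem shows
   [P_n^{(a,b)}(x) = \sum_m S_{a,b}(n,m) x^m], so the composition law expands
   [P^{(a+bc,bd)}] in the [P^{(c,d)}].  The theorem is the instance
   [(a,b) = (al - al' be/be', be/be')], [(c,d) = (al',be')]; the Lah numbers are
   the [S_{0,-1}(n,j)]. *)

Lemma big_ord_widen_eq0 (V : nmodType) (F : nat -> V) q N :
  (q <= N)%N -> (forall m, (q <= m)%N -> F m = 0) ->
  \sum_(m < q) F m = \sum_(m < N) F m.
Proof.
move=> leqN Fq; rewrite (big_ord_widen N F leqN) big_mkcond; apply: eq_bigr => i _.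
by case: ifP => // /negbT; rewrite -leqNgt => /Fq ->.
Qed.

Section Rising.
Variable R : comNzRingType.

Lemma rising0 (a : R) : rising a 0 = 1.
Proof. by rewrite /rising big_ord0. Qed.

Lemma risingS (a : R) n : rising a n.+1 = rising a n * (a + n%:R).
Proof. by rewrite /rising big_ord_recr. Qed.

Lemma risingD (c d : R) n :
  rising (c + d) n = \sum_(i < n.+1) 'C(n, i)%:R * rising c i * rising d (n - i).
Proof.
elim: n => [|n IH]; first by rewrite big_ord1 !rising0 /= !mulr1.
have splitS (i : 'I_n.+1) :
    'C(n, i)%:R * rising c i * rising d (n - i) * (c + d + n%:R)
  = 'C(n, i)%:R * rising c i.+1 * rising d (n - i)
    + 'C(n, i)%:R * rising c i * rising d (n - i).+1.
  have le_in : (i <= n)%N by rewrite -ltnS ltn_ord.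
  by rewrite !risingS natrB //; ring.
rewrite risingS IH mulr_suml (eq_bigr _ (fun i _ => splitS i)) big_split /=.
rewrite [in RHS]big_ord_recl /=.
under [in RHS]eq_bigr => i _ do rewrite /bump /= add1n binS natrD !mulrDl subSS.
rewrite big_split /= addrA [in LHS]addrC; congr (_ + _).
rewrite big_ord_recl /= !bin0 !subn0 rising0 !mul1r; congr (_ + _).
rewrite [in RHS]big_ord_recr /= bin_small // !mul0r addr0.
by apply: eq_bigr => i _; rewrite /bump /= add1n subnSK.
Qed.

End Rising.

Section ForwardDifference.
Variable R : comNzRingType.

Definition fdiff (F : nat -> R) (m : nat) : R :=
  \sum_(j < m.+1) (-1) ^+ (m - j) * 'C(m, j)%:R * F j.

Lemma eq_fdiff (F G : nat -> R) m : (forall j, F j = G j) -> fdiff F m = fdiff G m.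
Proof. by move=> eqFG; apply: eq_bigr => j _; rewrite eqFG. Qed.

Lemma fdiff0 (F : nat -> R) : fdiff F 0 = F 0%N.
Proof. by rewrite /fdiff big_ord1 /= expr0 !mul1r. Qed.

Lemma fdiffS (F : nat -> R) m : fdiff F m.+1 = fdiff (fun j => F j.+1 - F j) m.
Proof.
rewrite /fdiff big_ord_recl /= subn0 bin0.
under eq_bigr => j _ do rewrite /bump /= add1n subSS binS natrD mulrDr mulrDl.
rewrite big_split /= addrA addrC.
under [in RHS]eq_bigr => j _ do rewrite mulrBr.
rewrite sumrB; congr (_ + _).
rewrite [in RHS]big_ord_recl /= subn0 bin0 big_ord_recr /= bin_small // mulr0 mul0r addr0.
rewrite opprD exprS mulN1r !mulr1 mulNr; congr (_ + _).
rewrite -sumrN; apply: eq_bigr => j _; rewrite /bump /= add1n.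
by rewrite -(subnSK (ltn_ord j)) exprS; ring.
Qed.

Lemma fdiff_cst (c : R) m : fdiff (fun=> c) m.+1 = 0.
Proof. by rewrite fdiffS /fdiff big1 // => j _; rewrite subrr mulr0. Qed.

Lemma fdiffMl (F : nat -> R) c m : fdiff (fun j => c * F j) m = c * fdiff F m.
Proof. by rewrite /fdiff mulr_sumr; apply: eq_bigr => j _; rewrite mulrCA. Qed.

Lemma fdiffMr (F : nat -> R) c m : fdiff (fun j => F j * c) m = fdiff F m * c.
Proof. by rewrite /fdiff mulr_suml; apply: eq_bigr => j _; rewrite mulrA. Qed.

Lemma fdiffD (F G : nat -> R) m : fdiff (fun j => F j + G j) m = fdiff F m + fdiff G m.
Proof. by rewrite /fdiff -big_split; apply: eq_bigr => j _; rewrite mulrDr. Qed.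

Lemma fdiff_sum I (r : seq I) (P : pred I) (G : I -> nat -> R) m :
  fdiff (fun j => \sum_(i <- r | P i) G i j) m = \sum_(i <- r | P i) fdiff (G i) m.
Proof.
rewrite /fdiff exchange_big; apply: eq_bigr => j _; exact: mulr_sumr.
Qed.

Lemma fdiff_natmul (F : nat -> R) m :
  fdiff (fun j => j%:R * F j) m.+1 = m.+1%:R * (fdiff F m.+1 + fdiff F m).
Proof.
have shift : fdiff (fun j => j%:R * F j) m.+1 = m.+1%:R * fdiff (fun j => F j.+1) m.
  rewrite /fdiff big_ord_recl /= mul0r mulr0 add0r mulr_sumr.
  apply: eq_bigr => j _; rewrite /bump /= add1n subSS.
  have binM : (j.+1%:R * 'C(m.+1, j.+1)%:R : R) = m.+1%:R * 'C(m, j)%:R.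
    by rewrite -!natrM -mul_bin_diag.
  transitivity ((-1) ^+ (m - j) * (j.+1%:R * 'C(m.+1, j.+1)%:R) * F j.+1); first by ring.
  by rewrite binM; ring.
rewrite shift fdiffS -fdiffD; congr (_ * _).
by apply: eq_fdiff => j; rewrite subrK.
Qed.

End ForwardDifference.

Section StirlingType.
Variable R : numFieldType.
Implicit Types (a b c d : R) (n k : nat).

Lemma natr_fact_neq0 n : n`!%:R != 0 :> R.
Proof. by rewrite pnatr_eq0 -lt0n fact_gt0. Qed.

Lemma SabE a b n k : Sab a b n k = k`!%:R^-1 * fdiff (fun j => rising (- a - b * j%:R) n) k.
Proof. by []. Qed.

Lemma Sab00 a b : Sab a b 0 0 = 1.
Proof. by rewrite SabE fdiff0 rising0 invr1 mul1r. Qed.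

Lemma SabS0 a b n : Sab a b n.+1 0 = (n%:R - a) * Sab a b n 0.
Proof. by rewrite !SabE !fdiff0 risingS; ring. Qed.

Lemma SabSS a b n k :
  Sab a b n.+1 k.+1 = (n%:R - a - b * k.+1%:R) * Sab a b n k.+1 - b * Sab a b n k.
Proof.
pose r j := rising (- a - b * j%:R) n.
have risingSr : fdiff (fun j => rising (- a - b * j%:R) n.+1) k.+1
    = fdiff (fun j => r j * (n%:R - a) + j%:R * r j * - b) k.+1.
  by apply: eq_fdiff => j; rewrite risingS /r; ring.
rewrite !SabE risingSr fdiffD !fdiffMr fdiff_natmul factS natrM invfM.
by rewrite /r; field; rewrite natr_fact_neq0 nat1r pnatr_eq0.
Qed.

Lemma Sab_small a b n k : (n < k)%N -> Sab a b n k = 0.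
Proof.
elim: n k => [|n IH] [|k] // ltnk.
  by rewrite SabE; under eq_fdiff do rewrite rising0; rewrite fdiff_cst mulr0.
by rewrite SabSS !IH ?mulr0 ?subr0 // ltnW.
Qed.

Lemma sum_Sab_rising a b c n N : (n < N)%N ->
  \sum_(j < N) (-1) ^+ j * Sab a b n j * rising (- c) j = rising (- a - b * c) n.
Proof.
elim: n N => [|n IH] [|N] // ltnN.
  rewrite big_ord_recl /= Sab00 !rising0 !mulr1 big1 ?addr0 // => j _.
  by rewrite Sab_small // mulr0 mul0r.
(* By SabSS each term splits into [(n - a - b j) T j] plus the shifted [U (j-1)],
   and [U j + (n - a - b j) T j = (n - a - b c) T j]. *)
pose T j : R := (-1) ^+ j * Sab a b n j * rising (- c) j.
pose U j : R := b * T j * (- c + j%:R).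
have stepS j : (-1) ^+ j.+1 * Sab a b n.+1 j.+1 * rising (- c) j.+1
    = (n%:R - a - b * j.+1%:R) * T j.+1 + U j.
  by rewrite /U /T SabSS risingS exprS; ring.
have sumU : \sum_(j < N) U j = \sum_(j < N.+1) U j.
  by rewrite big_ord_recr /= /U /T Sab_small // !(mulr0, mul0r) addr0.
rewrite big_ord_recl SabS0; under eq_bigr => j _ do rewrite /bump /= stepS.
rewrite big_split /= addrA.
have -> : (-1) ^+ 0 * ((n%:R - a) * Sab a b n 0) * rising (- c) 0
    = (n%:R - a - b * 0%:R) * T 0%N by rewrite /T; ring.
rewrite -(big_ord_recl _ (fun j => (n%:R - a - b * j%:R) * T j)).
rewrite sumU -big_split /=.
rewrite risingS -(IH N.+1 (ltnW ltnN)) mulr_suml; apply: eq_bigr => j _.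
by rewrite /U /T; ring.
Qed.

Lemma sum_Sab_Sab a b c d n k N : (n < N)%N ->
  \sum_(j < N) (-1) ^+ j * Sab a b n j * Sab c d j k = Sab (a + b * c) (b * d) n k.
Proof.
move=> ltnN.
have SabdE (j : 'I_N) : (-1) ^+ j * Sab a b n j * Sab c d j k
    = k`!%:R^-1 * fdiff (fun i => (-1) ^+ j * Sab a b n j * rising (- (c + d * i%:R)) j) k.
  by rewrite [Sab c d j k]SabE fdiffMl mulrCA; under eq_fdiff do rewrite -opprD.
rewrite (eq_bigr _ (fun j _ => SabdE j)) -mulr_sumr -fdiff_sum SabE.
congr (_ * _); apply: eq_fdiff => i; rewrite sum_Sab_rising //.
by congr (rising _ _); ring.
Qed.

End StirlingType.

Section PowerSeries.
Variable R : numFieldType.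
Implicit Types (a b c d x : R) (f g : fps R) (m n : nat).

Lemma fps_one_mul g n : fps_mul fps_one g n = g n.
Proof.
rewrite /fps_mul big_ord_recl /= mul1r subn0 big1 ?addr0 // => i _.
by rewrite mul0r.
Qed.

Lemma fps_mul_fdiffr f (G : nat -> fps R) m n :
  fps_mul f (fun p => fdiff (G^~ p) m) n = fdiff (fun j => fps_mul f (G j) n) m.
Proof.
rewrite /fps_mul fdiff_sum; apply: eq_bigr => i _.
by rewrite -fdiffMl.
Qed.

Lemma fps_binom0 n : fps_binom (0 : R) n = fps_one n.
Proof.
rewrite /fps_binom /fps_one oppr0; case: n => [|n] /=.
  by rewrite rising0 invr1 mulr1.
by rewrite /rising big_ord_recl /= add0r !mul0r.
Qed.

Lemma fps_binomD c d n :
  fps_mul (fps_binom c) (fps_binom d) n = fps_binom (c + d) n.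
Proof.
rewrite /fps_mul /fps_binom opprD risingD mulr_suml; apply: eq_bigr => i _.
have le_in : (i <= n)%N by rewrite -ltnS ltn_ord.
have binn0 : 'C(n, i)%:R != 0 :> R by rewrite pnatr_eq0 -lt0n bin_gt0.
rewrite -(bin_fact le_in) !natrM.
by field; rewrite !natr_fact_neq0 binn0.
Qed.

Lemma fps_mul_binom_m1 b c n :
  fps_mul (fps_binom_m1 b) (fps_binom c) n = fps_binom (b + c) n - fps_binom c n.
Proof.
rewrite -fps_binomD -(fps_one_mul (fps_binom c)) /fps_mul -sumrB.
by apply: eq_bigr => i _; rewrite -mulrBl.
Qed.

Lemma fps_pow_binom_m1 b m n :
  fps_pow (fps_binom_m1 b) m n = fdiff (fun j => fps_binom (b * j%:R) n) m.
Proof.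
elim: m n => [|m IH] n; first by rewrite fdiff0 mulr0 fps_binom0.
transitivity (fps_mul (fps_binom_m1 b) (fun p => fdiff (fun j => fps_binom (b * j%:R) p) m) n).
  by apply: eq_bigr => i _; rewrite -IH.
rewrite (fps_mul_fdiffr _ (fun j => fps_binom (b * j%:R))) fdiffS.
apply: eq_fdiff => j.
by rewrite fps_mul_binom_m1 -add1n natrD mulrDr mulr1.
Qed.

Lemma fps_mul_binom_pow a b m n :
  fps_mul (fps_binom a) (fps_pow (fps_binom_m1 b) m) n = m`!%:R * Sab a b n m / n`!%:R.
Proof.
transitivity (fps_mul (fps_binom a) (fun p => fdiff (fun j => fps_binom (b * j%:R) p) m) n).
  by apply: eq_bigr => i _; rewrite fps_pow_binom_m1.
rewrite (fps_mul_fdiffr _ (fun j => fps_binom (b * j%:R))).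
under eq_fdiff do rewrite fps_binomD /fps_binom opprD.
by rewrite fdiffMr SabE mulrA divff ?natr_fact_neq0 // mul1r.
Qed.

Lemma fps_pow_binom_m1_small b m n :
  (n < m)%N -> fps_pow (fps_binom_m1 b) m n = 0.
Proof.
move=> ltnm; transitivity (fps_mul (fps_binom 0) (fps_pow (fps_binom_m1 b) m) n).
  by rewrite -fps_one_mul; apply: eq_bigr => i _; rewrite fps_binom0.
by rewrite fps_mul_binom_pow Sab_small // mulr0 mul0r.
Qed.

Lemma PpolyE a b n x : Ppoly a b n x = \sum_(m < n.+1) x ^+ m * Sab a b n m.
Proof.
rewrite /Ppoly /fps_mul /fps_expx.
have widen (i : 'I_n.+1) :
    \sum_(m < (n - i).+1) x ^+ m / m`!%:R * fps_pow (fps_binom_m1 b) m (n - i)%N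
  = \sum_(m < n.+1) x ^+ m / m`!%:R * fps_pow (fps_binom_m1 b) m (n - i)%N.
  apply: (@big_ord_widen_eq0 R
    (fun m => x ^+ m / m`!%:R * fps_pow (fps_binom_m1 b) m (n - i)%N)) => [|m ltm].
    by rewrite ltnS leq_subr.
  by rewrite fps_pow_binom_m1_small ?mulr0.
under eq_bigr => i _ do rewrite widen mulr_sumr.
rewrite exchange_big mulr_sumr; apply: eq_bigr => m _ /=.
transitivity (n`!%:R * (x ^+ m / m`!%:R * fps_mul (fps_binom a) (fps_pow (fps_binom_m1 b) m) n)).
  by rewrite /fps_mul !mulr_sumr; apply: eq_bigr => i _; ring.
by rewrite (fps_mul_binom_pow a b m n); field; rewrite !natr_fact_neq0.
Qed.

Lemma Ppoly_Sab_expansion a b c d n x :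
  Ppoly (a + b * c) (b * d) n x = \sum_(j < n.+1) (-1) ^+ j * Sab a b n j * Ppoly c d j x.
Proof.
have termE (j : 'I_n.+1) : (-1) ^+ j * Sab a b n j * Ppoly c d j x
    = \sum_(k < n.+1) x ^+ k * ((-1) ^+ j * Sab a b n j * Sab c d j k).
  rewrite PpolyE (@big_ord_widen_eq0 R (fun k => x ^+ k * Sab c d j k) j.+1 n.+1) //.
    by rewrite mulr_sumr; apply: eq_bigr => k _; ring.
  by move=> k ltjk; rewrite Sab_small ?mulr0.
rewrite PpolyE (eq_bigr _ (fun j _ => termE j)) exchange_big /=.
by apply: eq_bigr => k _; rewrite -mulr_sumr sum_Sab_Sab.
Qed.

End PowerSeries.

Section Lah.
Variable R : numFieldType.

Lemma lahSSE n j : lah n.+1 j.+1 = 'C(n, j)%:R * n.+1`!%:R / j.+1`!%:R :> R.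
Proof. by []. Qed.

Lemma lahS n j : lah n.+1 j.+1 = (n + j.+1)%:R * lah n j.+1 + lah n j :> R.
Proof.
case: n => [|n].
  case: j => [|j]; last by rewrite lahSSE bin_small // !mul0r mulr0 addr0.
  by rewrite lahSSE bin0 mul1r divff ?natr_fact_neq0 // mulr0 add0r.
case: j => [|j].
  by rewrite !lahSSE !bin0 addr0 (factS n.+1) natrM !mul1r !divr1 addn1.
have binE : ('C(n.+1, j.+1) * n.+2 = (n + j + 3) * 'C(n, j.+1) + j.+2 * 'C(n, j))%N.
  have := mul_bin_left n j; rewrite binS.
  by case: (leqP j n) => [le_jn|/bin_small->]; nia.
have n2_neq0 : n.+2%:R != 0 :> R by rewrite pnatr_eq0.
have binRE : 'C(n.+1, j.+1)%:R
    = ((n + j + 3)%:R * 'C(n, j.+1)%:R + j.+2%:R * 'C(n, j)%:R) / n.+2%:R :> R.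
  by rewrite -!natrM -natrD -binE natrM mulfK.
rewrite !lahSSE binRE (factS n.+1) (factS j.+1).
have := natr_fact_neq0 R n.+1; have := natr_fact_neq0 R j.+1.
move: (n.+1)`! (j.+1)`! => Fn Fj Fj_neq0 Fn_neq0; rewrite !natrM.
rewrite -[n.+2]addn2 -[j.+2]addn2 -[n.+1]addn1 -[j.+1]addn1 !natrD.
by field; rewrite Fj_neq0 -!natrD !pnatr_eq0 !addn2.
Qed.

Lemma Sab_lah n j : Sab (0 : R) (-1) n j = lah n j.
Proof.
elim: n j => [|n IH] [|j].
- by rewrite Sab00.
- by rewrite Sab_small.
- by rewrite SabS0 IH /lah; case: n {IH} => [|n] /=; rewrite ?mulr0 // subr0 mul0r.
- by rewrite SabSS lahS !IH subr0 natrD; ring.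
Qed.

End Lah.

Theorem proposition5 (R : realFieldType) (al be : R) (hbe : be != 0) :
  (forall (al' be' : R), be' != 0 -> forall (n : nat) (x : R),
     Ppoly al be n x =
     \sum_(j < n.+1) (-1) ^+ j * Sab (al - al' / be' * be) (be / be') n j
                      * Ppoly al' be' j x)
  /\
  (forall (n : nat) (x : R),
     Ppoly al be n x =
     \sum_(j < n.+1) (-1) ^+ j * lah n j * Ppoly (- al) (- be) j x).
Proof.
split=> [al' be' be'_neq0 n x | n x].
  rewrite -Ppoly_Sab_expansion.
  by congr (Ppoly _ _ n x); field.
have -> : Ppoly al be n x = Ppoly (0 + -1 * - al) (-1 * - be) n x.
  by congr (Ppoly _ _ n x); ring.
by rewrite Ppoly_Sab_expansion; apply: eq_bigr => j _; rewrite Sab_lah.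
Qed.
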